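(* Let $G$ be a connected graph on $n$ vertices $1,2,\ldots,n$ with incidence matrix $M$ and let $M^+$ be the Moore-Penrose inverse of $M$. (a) If $G$ has an odd cycle, then $MM^+=I_n$. (b) If $G$ has no odd cycles (i.e., $G$ is bipartite), then $MM^+=I_n-\frac{1}{n}[(-1)^{d(i,j)}]$, where $[(-1)^{d(i,j)}]$ denotes the $n\times n$ matrix whose $(i,j)$-entry is $(-1)^{d(i,j)}$.
   Context: The incidence matrix $M$ of a graph with vertices $1,\ldots,n$ and edges $e_1,\ldots,e_m$ is the $n\times m$ matrix with $(i,j)$-entry $1$ if vertex $i$ is incident with $e_j$ and $0$ otherwise. $d(i,j)$ is the graph distance. The Moore-Penrose inverse of a real matrix $A$ is the unique $A^+$ with $AA^+A=A$, $A^+AA^+=A^+$, $(AA^+)^T=AA^+$, $(A^+A)^T=A^+A$. *)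

From HB Require Import structures.
From mathcomp Require Import all_boot all_order all_algebra.
Set Implicit Arguments. Unset Strict Implicit. Unset Printing Implicit Defensive.
Import Order.TTheory GRing.Theory Num.Theory.
Local Open Scope ring_scope.

Definition simple_edges (n m : nat) (E : 'I_m -> {set 'I_n}) : Prop :=
  (forall e, #|E e| = 2%N) /\ injective E.

Definition adj (n m : nat) (E : 'I_m -> {set 'I_n}) : rel 'I_n :=
  fun i k => (i != k) && [exists e : 'I_m, E e == [set i; k]].

Definition connected_graph (n m : nat) (E : 'I_m -> {set 'I_n}) : Prop :=
  forall i j : 'I_n, connect (adj E) i j.

Definition has_odd_cycle (n m : nat) (E : 'I_m -> {set 'I_n}) : Prop :=
  exists c : seq 'I_n, [/\ ucycle (adj E) c, (3 <= size c)%N & odd (size c)].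

Definition incidence (R : pzRingType) (n m : nat) (E : 'I_m -> {set 'I_n})
  : 'M[R]_(n, m) := \matrix_(i < n, j < m) (if i \in E j then 1 else 0).

Definition walk_len (n m : nat) (E : 'I_m -> {set 'I_n}) (k : nat) (i j : 'I_n)
  : bool := [exists p : k.-tuple 'I_n, path (adj E) i p && (last i p == j)].

(* graph distance: the least k with a walk of length k from i to j
   (equals n if no such k < n exists, which does not happen for connected G) *)
Definition dist (n m : nat) (E : 'I_m -> {set 'I_n}) (i j : 'I_n) : nat :=
  find (fun k => walk_len E k i j) (iota 0 n).

Definition is_MP_inverse (R : numFieldType) (p q : nat)
  (A : 'M[R]_(p, q)) (X : 'M[R]_(q, p)) : Prop :=
  [/\ A *m X *m A = A, X *m A *m X = X,
      (A *m X)^T = A *m X & (X *m A)^T = X *m A].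

(* Let Q = I - M M^+. The Moore-Penrose identities make Q a symmetric matrix
   with Q M = 0 that fixes every row vector y with y M = 0. Such a y is
   alternating: y_u + y_v = 0 on every edge, so along a walk of length k
   from i to j, y_j = (-1)^k y_i. On a connected graph with an odd cycle this
   forces y = 0, hence Q = 0. On a connected bipartite graph every walk from
   i to j has the parity of d(i,j), so the rows of Q are multiples of
   s = [(-1)^d(i,v)]_v; as Q is symmetric and s Q = s, row i of Q is s / n. *)

From HB Require Import structures.
From mathcomp Require Import all_boot all_order all_algebra.
Import Order.TTheory GRing.Theory Num.Theory.
Local Open Scope ring_scope.
Set Implicit Arguments. Unset Strict Implicit.

Lemma cycle_split (T : eqType) (e : rel T) (x : T) (a b : seq T) :
  cycle e (x :: a ++ x :: b) -> cycle e (x :: a) && cycle e (x :: b).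
Proof. by rewrite /= rcons_cat cat_path /= !rcons_path => /and3P[-> /= -> ->]. Qed.

Lemma not_uniq_split (T : eqType) (c : seq T) :
  ~~ uniq c -> exists a x b1 b2, c = a ++ x :: b1 ++ x :: b2.
Proof.
elim: c => [|y s IHs] //=; rewrite negb_and negbK => /orP[].
  by case/splitPr=> b1 b2; exists [::], y, b1, b2.
by move/IHs=> [a [x [b1 [b2 ->]]]]; exists (y :: a), x, b1, b2.
Qed.

Section Walks.
Variables (n m : nat) (E : 'I_m -> {set 'I_n}).

Lemma adj_sym : symmetric (adj E).
Proof.
move=> i k; rewrite /adj eq_sym; congr (_ && _).
by apply/existsP/existsP=> -[e /eqP he]; exists e; rewrite he setUC.
Qed.

Lemma adj_irrefl i : adj E i i = false.
Proof. by rewrite /adj eqxx. Qed.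

(* A closed walk that is not a simple cycle splits at a repeated vertex into
   two shorter closed walks, one of which has odd length. *)
Lemma odd_cycle_has_odd_cycle (c : seq 'I_n) :
  cycle (adj E) c -> odd (size c) -> has_odd_cycle E.
Proof.
have [k] := ubnP (size c); elim: k c => // k IHk c lt_ck cyc_c odd_c.
have [uniq_c | /not_uniq_split[a [x [b1 [b2 def_c]]]]] := boolP (uniq c).
  exists c; split; rewrite ?/ucycle ?cyc_c ?uniq_c //.
  by case: c cyc_c odd_c {lt_ck uniq_c} => [|x [|y [|z c]]] //=;
    rewrite adj_irrefl.
have rot_c : rot (size a) c = x :: b1 ++ x :: (b2 ++ a).
  by rewrite def_c rot_size_cat /= -catA.
have /cycle_split/andP[cyc1 cyc2] : cycle (adj E) (x :: b1 ++ x :: (b2 ++ a)).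
  by move: cyc_c; rewrite -(rot_cycle (size a)) rot_c.
move: odd_c lt_ck; rewrite -(size_rot (size a)) rot_c -cat_cons size_cat oddD ltnS.
move=> odd_c le_ck; have [odd1 | even1] := boolP (odd (size (x :: b1))).
  apply: (IHk (x :: b1)) => //.
  by apply: leq_trans _ le_ck; rewrite /= addnS ltnS leq_addr.
apply: (IHk (x :: (b2 ++ a))) => //; last by rewrite (negbTE even1) in odd_c.
by apply: leq_trans _ le_ck; rewrite /= addSn ltnS leq_addl.
Qed.

Lemma closed_walk_even (x : 'I_n) (p : seq 'I_n) :
  ~ has_odd_cycle E -> path (adj E) x p -> last x p = x -> ~~ odd (size p).
Proof.
case/lastP: p => [|p y] // no_odd walk_p; rewrite last_rcons => def_y.
rewrite def_y in walk_p; apply/negP; rewrite size_rcons => odd_p; apply: no_odd.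
exact: (@odd_cycle_has_odd_cycle (x :: p)).
Qed.

Lemma walk_lenP k i j :
  reflect (exists p : seq 'I_n, [/\ size p = k, path (adj E) i p & last i p = j])
          (walk_len E k i j).
Proof.
apply: (iffP existsP) => [[p /andP[walk_p /eqP last_p]]|[p [size_p walk_p last_p]]].
  by exists (val p); rewrite size_tuple.
by exists (Tuple (introT eqP size_p)); rewrite /= walk_p last_p eqxx.
Qed.

Lemma walk_len_parity k l o v : ~ has_odd_cycle E ->
  walk_len E k o v -> walk_len E l o v -> ~~ odd (k + l).
Proof.
move=> no_odd /walk_lenP[p [<- walk_p last_p]] /walk_lenP[q [<- walk_q last_q]].
have -> : (size p + size q = size (p ++ rev (belast o q)))%N.
  by rewrite size_cat size_rev size_belast.
apply: (closed_walk_even (x := o) no_odd).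
  rewrite cat_path walk_p last_p -last_q rev_path.
  by rewrite (eq_path (e' := adj E)) // => z w; rewrite adj_sym.
rewrite last_cat last_p -last_q.
by case: q {walk_q last_q} => //= z q; rewrite rev_cons last_rcons.
Qed.

Lemma walk_len_rcons k i u v :
  walk_len E k i u -> adj E u v -> walk_len E k.+1 i v.
Proof.
case/walk_lenP=> p [size_p walk_p last_p] uv; apply/walk_lenP; exists (rcons p v).
by rewrite size_rcons size_p rcons_path walk_p last_p uv last_rcons.
Qed.

Lemma walk_len_dist i j : connect (adj E) i j -> walk_len E (dist E i j) i j.
Proof.
case/connectP=> p walk_p ->; have [q walk_q uniq_q _] := shortenP walk_p.
have lt_qn : (size q < n)%N.
  by have := max_card (mem (i :: q)); rewrite card_ord (card_uniqP uniq_q).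
have has_walk : has (fun k => walk_len E k i (last i q)) (iota 0 n).
  apply/hasP; exists (size q); first by rewrite mem_iota.
  by apply/walk_lenP; exists q.
have := nth_find 0%N has_walk; rewrite nth_iota //.
by move: has_walk; rewrite has_find size_iota.
Qed.

Lemma dist_refl i : dist E i i = 0%N.
Proof.
have n_gt0 : (0 < n)%N := leq_ltn_trans (leq0n i) (ltn_ord i).
rewrite /dist -[n in iota _ n](prednK n_gt0) /= ifT //.
by apply/walk_lenP; exists [::].
Qed.

Variable R : realFieldType.

Definition alternating (y : 'I_n -> R) := forall u v, adj E u v -> y u + y v = 0.

Lemma alternating_path (y : 'I_n -> R) x p : alternating y ->
  path (adj E) x p -> y (last x p) = (-1) ^+ size p * y x.
Proof.
move=> alt_y; elim: p x => [|z p IHp] x /=; first by rewrite mul1r.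
case/andP=> xz walk_p; rewrite IHp // exprS -mulrA mulN1r -mulrN; congr (_ * _).
by apply/eqP; rewrite -addr_eq0 addrC alt_y.
Qed.

Lemma alternating_walk (y : 'I_n -> R) k i j : alternating y ->
  walk_len E k i j -> y j = (-1) ^+ k * y i.
Proof. by move=> alt_y /walk_lenP[p [<- walk_p <-]]; apply: alternating_path. Qed.

Lemma alternating_dist (y : 'I_n -> R) i j : connected_graph E ->
  alternating y -> y j = (-1) ^+ dist E i j * y i.
Proof. by move=> conn alt_y; apply/alternating_walk/walk_len_dist. Qed.

Lemma alternating_odd_cycle (y : 'I_n -> R) : connected_graph E ->
  has_odd_cycle E -> alternating y -> y =1 (fun => 0).
Proof.
move=> conn [[|x c] [/andP[cyc_c _] _ odd_c]] // alt_y j.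
have y_x : y x = 0.
  have := alternating_path alt_y cyc_c; rewrite last_rcons size_rcons.
  rewrite -signr_odd [odd _]odd_c expr1 mulN1r => /eqP.
  by rewrite -addr_eq0 -mulr2n mulrn_eq0 /= => /eqP.
by rewrite (alternating_dist x) // y_x mulr0.
Qed.

Lemma alternating_sign_dist i : connected_graph E -> ~ has_odd_cycle E ->
  alternating (fun v => (-1) ^+ dist E i v).
Proof.
move=> conn no_odd u v uv.
have walk_u := walk_len_dist (conn i u); have walk_v := walk_len_dist (conn i v).
have := walk_len_parity no_odd (walk_len_rcons walk_u uv) walk_v.
rewrite oddD negb_add => /eqP odd_uv.
by rewrite -[in X in _ + X]signr_odd -odd_uv signr_odd exprS mulN1r addrN.
Qed.

Lemma mul_incidence_edge (y : 'rV[R]_n) e u v : u != v -> E e = [set u; v] ->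
  (y *m incidence R E) 0 e = y 0 u + y 0 v.
Proof.
move=> uv def_e; rewrite mxE (bigD1 u) //= (bigD1 v) 1?eq_sym //= big1 ?addr0.
  by rewrite !mxE def_e !inE !eqxx orbT !mulr1.
by move=> w /andP[wv wu]; rewrite mxE def_e !inE (negbTE wu) (negbTE wv) mulr0.
Qed.

Lemma incidence_left_kernelP (y : 'rV[R]_n) : simple_edges E ->
  y *m incidence R E = 0 <-> alternating (y 0).
Proof.
move=> [card_E _]; split=> [yM0 u v /andP[uv /existsP[e /eqP def_e]] | alt_y].
  by rewrite -(mul_incidence_edge y uv def_e) yM0 mxE.
apply/matrixP=> i e; rewrite [RHS]mxE (ord1 i).
have /cards2P[u [v [uv def_e]]] : #|E e| == 2%N by rewrite card_E.
rewrite (mul_incidence_edge y uv def_e); apply: alt_y.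
by rewrite /adj uv; apply/existsP; exists e; rewrite def_e.
Qed.

Lemma rows_alternating (p : nat) (Q : 'M[R]_(p, n)) : simple_edges E ->
  Q *m incidence R E = 0 -> forall r, alternating (Q r).
Proof.
move=> simple QM0 r; have := (incidence_left_kernelP (row r Q) simple).1.
by rewrite -row_mul QM0 row0 => /(_ erefl) alt u v /alt; rewrite !mxE.
Qed.

Lemma bipartite_left_kernel_projection (Q : 'M[R]_n) :
  simple_edges E -> connected_graph E -> ~ has_odd_cycle E ->
  Q^T = Q -> Q *m incidence R E = 0 ->
  (forall y : 'rV_n, y *m incidence R E = 0 -> y *m Q = y) ->
  Q = n%:R^-1 *: \matrix_(i, j) (-1) ^+ dist E i j.
Proof.
move=> simple conn no_odd symQ QM0 fixQ; apply/matrixP=> i j; rewrite !mxE.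
pose s : 'rV[R]_n := \row_v (-1) ^+ dist E i v.
have Q_row r v : Q r v = (-1) ^+ dist E i v * Q r i.
  exact: alternating_dist (rows_alternating simple QM0 r).
have sM0 : s *m incidence R E = 0.
  by apply/incidence_left_kernelP => // u v; rewrite !mxE; apply: alternating_sign_dist.
have sym_entry r v : Q r v = Q v r by rewrite -[in LHS]symQ mxE.
have n_Qii : Q i i *+ n = 1.
  have /matrixP/(_ 0 i) := fixQ s sM0; rewrite !mxE dist_refl expr0 => <-.
  under eq_bigr => r _ do rewrite !mxE sym_entry Q_row mulrA -expr2 sqrr_sign mul1r.
  by rewrite sumr_const card_ord.
have n_neq0 : n%:R != 0 :> R by rewrite pnatr_eq0 -lt0n (leq_ltn_trans _ (ltn_ord i)).
by rewrite Q_row mulrC -[Q i i](mulfK n_neq0) mulr_natr n_Qii mul1r.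
Qed.

End Walks.

Lemma MP_residual (R : numFieldType) (p q : nat) (A : 'M[R]_(p, q)) X :
  is_MP_inverse A X -> let Q := 1%:M - A *m X in
  [/\ Q^T = Q, Q *m A = 0 & forall k (y : 'M_(k, p)), y *m A = 0 -> y *m Q = y].
Proof.
move=> [AXA _ symAX _] /=; split.
- by rewrite linearB /= trmx1 symAX.
- by rewrite mulmxBl mul1mx AXA subrr.
- by move=> k y yA0; rewrite mulmxBr mulmx1 mulmxA yA0 mul0mx subr0.
Qed.

Unset Implicit Arguments. Set Strict Implicit.

Theorem mainTheorem7 (R : realFieldType) (n m : nat) (E : 'I_m -> {set 'I_n})
  (Xp : 'M[R]_(m, n)) :
  simple_edges E -> connected_graph E ->
  is_MP_inverse (incidence R E) Xp ->
  (has_odd_cycle E -> incidence R E *m Xp = 1%:M) /\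
  (~ has_odd_cycle E ->
     incidence R E *m Xp =
       1%:M - (n%:R)^-1 *: \matrix_(i < n, j < n) ((-1) ^+ dist E i j)).
Proof.
move=> simple conn /MP_residual[symQ QM0 fixQ].
set Q := 1%:M - _ in symQ QM0 fixQ.
have -> : incidence R E *m Xp = 1%:M - Q by rewrite opprB addrC subrK.
split=> [odd_cycle | no_odd].
  suff -> : Q = 0 by rewrite subr0.
  apply/matrixP=> i j; rewrite [RHS]mxE.
  exact: alternating_odd_cycle conn odd_cycle (rows_alternating simple QM0 i) j.
by rewrite (bipartite_left_kernel_projection simple conn no_odd symQ QM0 (fixQ 1%N)).
Qed.
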